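(* Let $n$ be a positive integer. If $n\equiv 1\pmod 4$, then \[ \sum_{k=0}^{n-1}\frac{(q;q^4)_k^2}{(q^4;q^4)_k^2}\,q^{2k}\equiv \frac{(q^{3};q^4)_{(n-1)/4}}{(q^4;q^4)_{(n-1)/4}}\pmod{\Phi_n(q)}, \] and if $n\equiv 3\pmod 4$, then \[ \sum_{k=0}^{n-1}\frac{(q;q^4)_k^2}{(q^4;q^4)_k^2}\,q^{2k}\equiv 0\pmod{\Phi_n(q)}. \]
   Context: For an indeterminate (or complex number) $a$ and a nonnegative integer $k$, the $q$-Pochhammer symbol is $(a;q)_k=\prod_{j=0}^{k-1}(1-aq^j)$, with $(a;q)_0=1$. $\Phi_n(q)=\prod_{1\le j\le n,\ \gcd(j,n)=1}(q-e^{2\pi i j/n})$ denotes the $n$-th cyclotomic polynomial. A congruence between rational functions in $q$ modulo a polynomial $P(q)$ means that the difference, written as a ratio of polynomials with denominator coprime to $P(q)$, has numerator divisible by $P(q)$. *)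

From HB Require Import structures.
From mathcomp Require Import all_boot all_order all_algebra all_field.
Set Implicit Arguments. Unset Strict Implicit. Unset Printing Implicit Defensive.
Import Order.TTheory GRing.Theory Num.Theory.
Local Open Scope ring_scope.

Notation ratfun := {fraction {poly rat}}.

Definition qv : ratfun := tofrac 'X.

Definition qpoch (F : comRingType) (a b : F) (k : nat) : F :=
  \prod_(j < k) (1 - a * b ^+ j).

Definition PhiQ (n : nat) : {poly rat} := map_poly (fun z : int => z%:~R) 'Phi_n.

Definition cong_ratfun (f g : ratfun) (P : {poly rat}) : Prop :=
  exists N D : {poly rat},
    [/\ D != 0, coprimep D P, P %| N & f - g = tofrac N / tofrac D].

Definition lhs_sum (n : nat) : ratfun :=
  \sum_(0 <= k < n)
     (qpoch qv (qv ^+ 4) k) ^+ 2 / (qpoch (qv ^+ 4) (qv ^+ 4) k) ^+ 2 * qv ^+ (2 * k).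

From HB Require Import structures.
From mathcomp Require Import all_boot all_order all_algebra all_field.
From mathcomp Require Import ring zify.
Import Order.TTheory GRing.Theory Num.Theory.
Set Implicit Arguments. Unset Strict Implicit. Unset Printing Implicit Defensive.
Local Open Scope ring_scope.

(* Evaluate at a primitive n-th root of unity z in algC.  Since Phi_n is the
   minimal polynomial of z over Q, a rational function whose denominator does not
   vanish at z is 0 modulo Phi_n as soon as its value at z is 0.
   For odd n, p = z^4 is again a primitive n-th root of unity.  If z^(4s+1) = 1,
   i.e. z = p^-s, the k-th summand at z is p^(k^2) [s k]_p^2, so by q-Vandermonde
   the whole sum equals [2s s]_p.  For n = 4r+1 take s = r, and then
   [2r r]_p = (z^3; p)_r / (p; p)_r; for n = 4r+3 take s = 3r+2, and then the
   numerator of [2s s]_p contains the factor 1 - p^n = 0. *)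

Section CauchyBinomial.
Variables (R : comUnitRingType) (p : R).

Definition cauchy_poly (a : R) (s : nat) : {poly R} :=
  \prod_(j < s) (1 + (a * p ^+ j) *: 'X).

(* [cauchy_coef s k] is [p ^ (k choose 2)] times the Gaussian binomial [s k]_p. *)
Definition cauchy_coef (s k : nat) : R := (cauchy_poly 1 s)`_k.

Lemma cauchy_polyS a s :
  cauchy_poly a s.+1 = cauchy_poly a s + (a * p ^+ s) *: (cauchy_poly a s * 'X).
Proof. by rewrite /cauchy_poly big_ord_recr /= mulrDr mulr1 scalerAr. Qed.

Lemma coef_cauchy_polyS0 a s : (cauchy_poly a s.+1)`_0 = (cauchy_poly a s)`_0.
Proof. by rewrite cauchy_polyS coefD coefZ coefMX /= mulr0 addr0. Qed.

Lemma coef_cauchy_polySS a s k :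
  (cauchy_poly a s.+1)`_k.+1 = (cauchy_poly a s)`_k.+1 + a * p ^+ s * (cauchy_poly a s)`_k.
Proof. by rewrite cauchy_polyS coefD coefZ coefMX. Qed.

Lemma coef0_cauchy_poly a s : (cauchy_poly a s)`_0 = 1.
Proof.
elim: s => [|s IHs]; last by rewrite coef_cauchy_polyS0.
by rewrite /cauchy_poly big_ord0 coef1.
Qed.

Lemma coef_cauchy_poly_gt a s k : (s < k)%N -> (cauchy_poly a s)`_k = 0.
Proof.
elim: s k => [|s IHs] [|k] //= lt_sk; first by rewrite /cauchy_poly big_ord0 coef1.
by rewrite coef_cauchy_polySS !IHs ?mulr0 ?addr0 // ltnW.
Qed.

Lemma coef_cauchy_poly a s k : (cauchy_poly a s)`_k = a ^+ k * cauchy_coef s k.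
Proof.
rewrite /cauchy_coef; elim: s k => [|s IHs] [|k].
- by rewrite !coef0_cauchy_poly mulr1.
- by rewrite /cauchy_poly !big_ord0 !coef1 mulr0.
- by rewrite !coef0_cauchy_poly mulr1.
- by rewrite !coef_cauchy_polySS !IHs mul1r exprS; ring.
Qed.

Lemma cauchy_coefS s k :
  cauchy_coef s k.+1 * (1 - p ^+ k.+1) = cauchy_coef s k * (p ^+ k - p ^+ s).
Proof.
rewrite /cauchy_coef; elim: s k => [|s IHs] k.
  rewrite coef_cauchy_poly_gt // mul0r; case: k => [|k]; first by rewrite subrr mulr0.
  by rewrite coef_cauchy_poly_gt // mul0r.
case: k => [|k].
  have := IHs 0%N; rewrite coef_cauchy_polySS !coef0_cauchy_poly => IH0.
  by rewrite mulrDl IH0 expr1 expr0 exprS; ring.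
have IH1 := IHs k.+1; have IH0 := IHs k; rewrite !coef_cauchy_polySS.
set c2 := (cauchy_poly 1 s)`_k.+2 in IH1 *.
set c1 := (cauchy_poly 1 s)`_k.+1 in IH0 IH1 *.
set c0 := (cauchy_poly 1 s)`_k in IH0 *.
apply/eqP; rewrite -subr_eq0; apply/eqP.
transitivity ((c2 * (1 - p ^+ k.+2) - c1 * (p ^+ k.+1 - p ^+ s))
    + p * p ^+ s * (c1 * (1 - p ^+ k.+1) - c0 * (p ^+ k - p ^+ s))).
  by rewrite !exprS; ring.
by rewrite IH1 IH0 !subrr mulr0 addr0.
Qed.

Lemma cauchy_coef_qpoch s k :
  cauchy_coef s k * qpoch p p k = \prod_(i < k) (p ^+ i - p ^+ s).
Proof.
elim: k => [|k IHk]; first by rewrite /qpoch !big_ord0 mulr1 /cauchy_coef coef0_cauchy_poly.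
rewrite /qpoch !big_ord_recr /= -exprS mulrCA cauchy_coefS mulrA.
by rewrite [_ * cauchy_coef s k]mulrC IHk.
Qed.

Definition rcauchy_poly (s : nat) : {poly R} := \prod_(j < s) ('X + (p ^+ j)%:P).

Lemma rcauchy_polyS s : rcauchy_poly s.+1 = rcauchy_poly s * 'X + rcauchy_poly s * (p ^+ s)%:P.
Proof. by rewrite /rcauchy_poly big_ord_recr /= mulrDr. Qed.

Lemma coef_rcauchy_poly_gt s i : (s < i)%N -> (rcauchy_poly s)`_i = 0.
Proof.
elim: s i => [|s IHs] [|i] //= lt_si; first by rewrite /rcauchy_poly big_ord0 coef1.
by rewrite rcauchy_polyS coefD coefMX coefMC !IHs ?mul0r ?addr0 // ltnW.
Qed.

Lemma coef_rcauchy_poly s i k : (i + k = s)%N -> (rcauchy_poly s)`_i = cauchy_coef s k.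
Proof.
rewrite /cauchy_coef; elim: s i k => [|s IHs] i k.
  move/eqP; rewrite addn_eq0 => /andP[/eqP -> /eqP ->].
  by rewrite /rcauchy_poly /cauchy_poly !big_ord0.
case: i => [|i].
  rewrite add0n => ->; rewrite rcauchy_polyS coefD coefMX coefMC add0r.
  rewrite coef_cauchy_polySS (IHs 0%N s) //.
  by rewrite (@coef_cauchy_poly_gt 1 s s.+1) // add0r mul1r mulrC.
case: k => [|k].
  rewrite addn0 => -[->]; rewrite rcauchy_polyS coefD coefMX coefMC.
  rewrite coef_cauchy_polyS0 coef0_cauchy_poly.
  by rewrite (@coef_rcauchy_poly_gt s s.+1) // mul0r addr0 (IHs s 0%N) ?addn0 // coef0_cauchy_poly.
rewrite addSn => -[eq_s]; rewrite rcauchy_polyS coefD coefMX coefMC coef_cauchy_polySS /=.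
by rewrite (IHs i k.+1) // (IHs i.+1 k) ?addSnnS // mul1r mulrC.
Qed.

Lemma rcauchy_polyE a s :
  a * p ^+ s.-1 = 1 -> rcauchy_poly s = (\prod_(j < s) p ^+ j) *: cauchy_poly a s.
Proof.
move=> a_inv.
rewrite /cauchy_poly [X in _ *: X](reindex_inj rev_ord_inj) -scaler_prod /=.
apply: eq_bigr => j _; rewrite scalerDr scalerA -alg_polyC addrC; congr (_ + _).
rewrite mulrCA -exprD.
have -> : (j + (s - j.+1) = s.-1)%N by have := ltn_ord j; lia.
by rewrite a_inv scale1r.
Qed.

Lemma cauchy_polyD a s t :
  cauchy_poly a s * cauchy_poly (a * p ^+ s) t = cauchy_poly a (s + t).
Proof.
rewrite /cauchy_poly big_split_ord /=; congr (_ * _); apply: eq_bigr => j _.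
by rewrite exprD mulrA.
Qed.

(* q-Vandermonde [2s s]_p = sum_k p^(k^2) [s k]_p^2, read off the coefficient of
   X^s in [cauchy_poly p s * rcauchy_poly s]. *)
Lemma sum_cauchy_coef_sqr s : p \is a GRing.unit ->
  (\prod_(j < s) p ^+ j) * \sum_(k < s.+1) p ^+ k * cauchy_coef s k ^+ 2
  = cauchy_coef (s + s) s.
Proof.
move=> p_unit; set P := \prod_(j < s) p ^+ j; pose a := p^-1 ^+ s.-1.
have a_inv : a * p ^+ s.-1 = 1 by rewrite -exprMn mulVr // expr1n.
have P2a : P * P * a ^+ s = 1.
  rewrite -mulrA; have -> : P * a ^+ s = \prod_(j < s) (p ^+ j * a).
    by rewrite big_split /= prodr_const card_ord.
  rewrite {1}/P (reindex_inj rev_ord_inj) -big_split /= big1 // => j _.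
  rewrite mulrA -exprD.
  have -> : (s - j.+1 + j = s.-1)%N by have := ltn_ord j; lia.
  by rewrite mulrC.
have gen : cauchy_poly p s * rcauchy_poly s = P *: cauchy_poly a (s + s).
  rewrite (rcauchy_polyE a_inv) -scalerAr mulrC -cauchy_polyD.
  congr (_ *: (_ * _)); apply: eq_bigr => j _; congr (1 + (_ * _) *: 'X).
  have s_gt0 : (0 < s)%N := leq_ltn_trans (leq0n j) (ltn_ord j).
  by rewrite -(prednK s_gt0) exprS mulrCA a_inv mulr1.
have := congr1 (fun q : {poly R} => q`_s) gen; rewrite coefM coefZ coef_cauchy_poly.
rewrite mulrA => sum_coef.
transitivity (P * (P * a ^+ s * cauchy_coef (s + s) s)); last by rewrite !mulrA P2a mul1r.
rewrite -sum_coef; apply: congr1; apply: eq_bigr => k _.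
rewrite coef_cauchy_poly (@coef_rcauchy_poly s (s - k) k) ?subnK ?mulrA //.
by rewrite -ltnS.
Qed.

End CauchyBinomial.

Definition lhs_term (F : fieldType) (q : F) (k : nat) : F :=
  qpoch q (q ^+ 4) k ^+ 2 / qpoch (q ^+ 4) (q ^+ 4) k ^+ 2 * q ^+ (2 * k).

Definition rhs_term (F : fieldType) (q : F) (r : nat) : F :=
  qpoch (q ^+ 3) (q ^+ 4) r / qpoch (q ^+ 4) (q ^+ 4) r.

Section AtPrimitiveRoot.
Variables (F : fieldType) (z : F) (n : nat).
Hypotheses (z_prim : n.-primitive_root z) (n_odd : odd n).
Local Notation p := (z ^+ 4).

Lemma prim_root_neq0 : z != 0.
Proof.
apply/eqP => z0; have := prim_expr_order z_prim.
by rewrite z0 expr0n gtn_eqF ?(prim_order_gt0 z_prim) // => /eqP; rewrite eq_sym oner_eq0.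
Qed.

Lemma prod_prim_expr_neq0 s : \prod_(j < s) p ^+ j != 0.
Proof. by apply/prodf_neq0 => j _; rewrite !expf_neq0 ?prim_root_neq0. Qed.

Lemma qpoch_prim_neq0 k : (k < n)%N -> qpoch p p k != 0.
Proof.
move=> lt_kn; have p_prim : n.-primitive_root p.
  by rewrite prim_root_exp_coprime // (_ : 4 = 2 ^ 2)%N // coprime_pexpl // coprime2n.
apply/prodf_neq0 => i _; rewrite subr_eq0 eq_sym -exprS -(prim_order_dvd p_prim).
by apply/negP => /(dvdn_leq (ltn0Sn _)); rewrite leqNgt (leq_ltn_trans _ lt_kn).
Qed.

Lemma lhs_term_prim s k : z ^+ (4 * s + 1) = 1 -> (k < n)%N ->
  lhs_term z k = p ^+ k * cauchy_coef p s k ^+ 2.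
Proof.
move=> zs lt_kn; have D_neq0 := qpoch_prim_neq0 lt_kn.
have psz : p ^+ s * z = 1 by rewrite -exprM -exprSr -addn1.
(* As [z = p^-s], each factor [p^i - p^s] of the Gaussian numerator is [- p^s (1 - z p^i)]. *)
have coef_qpoch : cauchy_coef p s k * qpoch p p k = (- p ^+ s) ^+ k * qpoch z p k.
  rewrite cauchy_coef_qpoch /qpoch.
  transitivity (\prod_(i < k) (- p ^+ s * (1 - z * p ^+ i))).
    by apply: eq_bigr => i _; rewrite mulrBr mulr1 mulrA mulNr psz; ring.
  by rewrite big_split /= prodr_const card_ord.
have sqr_sign : ((- p ^+ s) ^+ k) ^+ 2 = (p ^+ s) ^+ (2 * k).
  by rewrite -exprM mulnC exprM (sqrrN (p ^+ s)) [RHS]exprM.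
have z2k : z ^+ (2 * k) = p ^+ k * ((- p ^+ s) ^+ k) ^+ 2.
  rewrite sqr_sign -!exprM -exprD.
  have -> : (4 * k + 4 * (s * (2 * k)) = 2 * k + (4 * s + 1) * (2 * k))%N by nia.
  by rewrite exprD [z ^+ ((4 * s + 1) * _)]exprM zs expr1n mulr1.
have -> : cauchy_coef p s k = (- p ^+ s) ^+ k * qpoch z p k / qpoch p p k.
  by rewrite -coef_qpoch mulfK.
by rewrite /lhs_term z2k; field; exact: D_neq0.
Qed.

Lemma sum_lhs_term_prim s : z ^+ (4 * s + 1) = 1 -> (s < n)%N ->
  (\prod_(j < s) p ^+ j) * \sum_(0 <= k < n) lhs_term z k = cauchy_coef p (s + s) s.
Proof.
move=> zs lt_sn; have p_unit : p \is a GRing.unit by rewrite unitfE expf_neq0 ?prim_root_neq0.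
rewrite -(sum_cauchy_coef_sqr s p_unit); apply: congr1.
pose G k := p ^+ k * cauchy_coef p s k ^+ 2.
rewrite big_mkord (eq_bigr (G \o val)) => [|k _].
  rewrite (big_ord_widen n G lt_sn) [RHS]big_mkcond /=; apply: eq_bigr => k _.
  case: ltnP => // lt_sk.
  by rewrite /G /cauchy_coef coef_cauchy_poly_gt // expr2 mul0r mulr0.
exact: lhs_term_prim.
Qed.

Lemma sum_lhs_term_1mod4 r : n = (4 * r + 1)%N ->
  \sum_(0 <= k < n) lhs_term z k = rhs_term z r.
Proof.
move=> n_eq; have lt_rn : (r < n)%N by lia.
have zr : z ^+ (4 * r + 1) = 1 by rewrite -n_eq prim_expr_order.
set P := \prod_(j < r) p ^+ j.
(* Reversing the product: [p^(r-1-i) - p^(2r) = p^(r-1-i) (1 - z^3 p^i)] since [z^(4r+1) = 1]. *)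
have prod_eq : \prod_(i < r) (p ^+ i - p ^+ (r + r)) = P * qpoch (z ^+ 3) p r.
  rewrite /qpoch [X in _ = _ * X](reindex_inj rev_ord_inj) /= /P -big_split /=.
  apply: eq_bigr => i _; have lt_ir := ltn_ord i.
  rewrite mulrBr mulr1 mulrCA -exprD -!exprM -exprD.
  have -> : (3 + 4 * (i + (r - i.+1)) = 4 * r - 1)%N by lia.
  have -> : (4 * (r + r) = (4 * r - 1) + (4 * r + 1))%N by lia.
  by rewrite exprD zr mulr1.
apply: (mulfI (prod_prim_expr_neq0 r)); rewrite sum_lhs_term_prim //.
have := cauchy_coef_qpoch p (r + r) r; rewrite prod_eq /rhs_term mulrA => <-.
by rewrite mulfK // qpoch_prim_neq0.
Qed.

Lemma sum_lhs_term_3mod4 r : n = (4 * r + 3)%N -> \sum_(0 <= k < n) lhs_term z k = 0.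
Proof.
move=> n_eq; set s := (3 * r + 2)%N; have lt_sn : (s < n)%N by lia.
have zs : z ^+ (4 * s + 1) = 1.
  have -> : (4 * s + 1 = n * 3)%N by rewrite /s n_eq; lia.
  by rewrite exprM (prim_expr_order z_prim) expr1n.
have coef0 : cauchy_coef p (s + s) s = 0.
  have := cauchy_coef_qpoch p (s + s) s.
  have -> : \prod_(i < s) (p ^+ i - p ^+ (s + s)) = 0.
    apply/eqP/prodf_eq0; have lt_is : (2 * r + 1 < s)%N by lia.
    exists (Ordinal lt_is) => //=.
    have -> : (s + s = 2 * r + 1 + n)%N by rewrite /s n_eq; lia.
    have pn : p ^+ n = 1 by rewrite exprAC (prim_expr_order z_prim) expr1n.
    by rewrite [p ^+ (_ + n)]exprD pn mulr1 subrr.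
  by move/eqP; rewrite mulf_eq0 (negbTE (qpoch_prim_neq0 lt_sn)) orbF => /eqP.
by apply: (mulfI (prod_prim_expr_neq0 s)); rewrite mulr0 sum_lhs_term_prim.
Qed.

End AtPrimitiveRoot.

Section FracValue.
Variables (R : idomainType) (K : fieldType) (phi : {rmorphism R -> K}).

(* When [phi] is evaluation at a point, [frac_value f v] says that [f] is regular
   there with value [v]. *)
Definition frac_value (f : {fraction R}) (v : K) : Prop :=
  exists a b : R, [/\ phi b != 0, f = tofrac a / tofrac b & v = phi a / phi b].

Lemma tofrac_neq0 b : phi b != 0 -> tofrac b != 0 :> {fraction R}.
Proof. by rewrite tofrac_eq0; apply: contraNneq => ->; rewrite rmorph0. Qed.

Lemma frac_value_tofrac a : frac_value (tofrac a) (phi a).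
Proof. by exists a, 1; rewrite rmorph1 oner_neq0 tofrac1 !divr1. Qed.

Lemma frac_valueD f g v w :
  frac_value f v -> frac_value g w -> frac_value (f + g) (v + w).
Proof.
move=> [a [b [b_neq0 -> ->]]] [c [d [d_neq0 -> ->]]].
exists (a * d + c * b), (b * d); split; first by rewrite rmorphM mulf_neq0.
  by rewrite addf_div ?tofrac_neq0 // rmorphD !rmorphM.
by rewrite addf_div // rmorphD !rmorphM.
Qed.

Lemma frac_valueN f v : frac_value f v -> frac_value (- f) (- v).
Proof.
by move=> [a [b [b_neq0 -> ->]]]; exists (- a), b; rewrite !rmorphN !mulNr.
Qed.

Lemma frac_valueB f g v w :
  frac_value f v -> frac_value g w -> frac_value (f - g) (v - w).
Proof. by move=> fv gw; apply: frac_valueD fv (frac_valueN gw). Qed.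

Lemma frac_valueM f g v w :
  frac_value f v -> frac_value g w -> frac_value (f * g) (v * w).
Proof.
move=> [a [b [b_neq0 -> ->]]] [c [d [d_neq0 -> ->]]].
by exists (a * c), (b * d); rewrite !rmorphM mulf_neq0 // !mulf_div.
Qed.

Lemma frac_valueX f v m : frac_value f v -> frac_value (f ^+ m) (v ^+ m).
Proof.
move=> fv; elim: m => [|m IHm]; last by rewrite !exprS; apply: frac_valueM.
by have := frac_value_tofrac 1; rewrite rmorph1 !expr0.
Qed.

Lemma frac_valueV f v : frac_value f v -> v != 0 -> frac_value f^-1 v^-1.
Proof.
move=> [a [b [b_neq0 -> ->]]] v_neq0; exists b, a; rewrite !invf_div; split=> //.
by apply: contraNneq v_neq0 => ->; rewrite mul0r.
Qed.

Lemma frac_value_sum (I : eqType) (r : seq I) (F : I -> {fraction R}) (G : I -> K) :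
  {in r, forall i, frac_value (F i) (G i)} ->
  frac_value (\sum_(i <- r) F i) (\sum_(i <- r) G i).
Proof.
move=> FG; rewrite !big_seq; apply: big_ind2 => // [|? ? ? ?]; last exact: frac_valueD.
by have := frac_value_tofrac 0; rewrite !rmorph0.
Qed.

Lemma frac_value_qpoch f g v w k :
  frac_value f v -> frac_value g w -> frac_value (qpoch f g k) (qpoch v w k).
Proof.
have frac_value1 : frac_value 1 1 by have := frac_value_tofrac 1; rewrite !rmorph1.
move=> fv gw; apply: big_ind2 => // [? ? ? ?|i _]; first exact: frac_valueM.
by apply/frac_valueB/frac_valueM/frac_valueX.
Qed.

Lemma frac_value_lhs_term f v k :
  frac_value f v -> qpoch (v ^+ 4) (v ^+ 4) k != 0 ->
  frac_value (lhs_term f k) (lhs_term v k).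
Proof.
move=> fv D_neq0; have f4 := frac_valueX 4 fv.
apply/frac_valueM/frac_valueX => //; apply/frac_valueM/frac_valueV.
- exact/frac_valueX/frac_value_qpoch.
- exact/frac_valueX/frac_value_qpoch.
- exact: expf_neq0.
Qed.

Lemma frac_value_rhs_term f v r :
  frac_value f v -> qpoch (v ^+ 4) (v ^+ 4) r != 0 ->
  frac_value (rhs_term f r) (rhs_term v r).
Proof.
move=> fv D_neq0; have f4 := frac_valueX 4 fv.
by apply/frac_valueM/frac_valueV => //; apply/frac_value_qpoch => //; apply: frac_valueX.
Qed.

End FracValue.

Section CyclotomicCongruence.
Variables (n : nat) (z : algC).
Hypothesis z_prim : n.-primitive_root z.
Local Notation ev := (horner_eval z \o map_poly ratr).

Lemma dvdp_PhiQ q : (PhiQ n %| q) = root (map_poly ratr q) z.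
Proof.
have [pz [Dpz _] dvdp_pz] := minCpolyP z; suff -> : PhiQ n = pz by rewrite dvdp_pz.
apply: (@map_inj_poly _ _ (ratr : rat -> algC)); [exact: fmorph_inj | exact: rmorph0 |].
rewrite -Dpz (minCpoly_cyclotomic z_prim) -(Cintr_Cyclotomic z_prim) /PhiQ -map_poly_comp.
by apply: eq_map_poly => x /=; rewrite ratr_int.
Qed.

Lemma PhiQ_irreducible : irreducible_poly (PhiQ n).
Proof.
have PhiQ_neq0 : PhiQ n != 0 by apply/monic_neq0/monic_map/Cyclotomic_monic.
have root_PhiQ : root (map_poly ratr (PhiQ n)) z by rewrite -dvdp_PhiQ.
apply/(subfx_irreducibleP root_PhiQ PhiQ_neq0) => q; rewrite -dvdp_PhiQ => PhiQ_q q_neq0.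
exact: dvdp_leq.
Qed.

Lemma cong_ratfun_frac_value f g : frac_value ev (f - g) 0 -> cong_ratfun f g (PhiQ n).
Proof.
move=> [a [b [/= b_neq0 fg_eq val0]]]; rewrite !horner_evalE in b_neq0 val0.
exists a, b; split => //.
- by apply: contraNneq b_neq0 => ->; rewrite rmorph0 horner0.
- rewrite coprimep_sym irreducible_poly_coprime; last exact: PhiQ_irreducible.
  by rewrite (dvdp_PhiQ b) rootE.
- move/esym/eqP: val0; rewrite mulf_eq0 invr_eq0 (negbTE b_neq0) orbF.
  by rewrite dvdp_PhiQ rootE.
Qed.

Lemma frac_value_qv : frac_value ev qv z.
Proof. by have := frac_value_tofrac ev 'X; rewrite /= horner_evalE map_polyX hornerX. Qed.

Lemma frac_value_lhs_sum : odd n ->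
  frac_value ev (lhs_sum n) (\sum_(0 <= k < n) lhs_term z k).
Proof.
move=> n_odd; apply: frac_value_sum => k; rewrite mem_index_iota => /andP[_ lt_kn].
exact: frac_value_lhs_term frac_value_qv (qpoch_prim_neq0 z_prim n_odd lt_kn).
Qed.

End CyclotomicCongruence.

Theorem theorem1 (n : nat) (hn : (0 < n)%N) :
  ((n %% 4 = 1)%N ->
     cong_ratfun (lhs_sum n)
       (qpoch (qv ^+ 3) (qv ^+ 4) ((n - 1) %/ 4)
          / qpoch (qv ^+ 4) (qv ^+ 4) ((n - 1) %/ 4))
       (PhiQ n)) /\
  ((n %% 4 = 3)%N -> cong_ratfun (lhs_sum n) 0 (PhiQ n)).
Proof.
have [z z_prim] := C_prim_root_exists hn.
split=> n_mod4; apply: (cong_ratfun_frac_value z_prim).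
  set r := ((n - 1) %/ 4)%N; have n_eq : n = (4 * r + 1)%N by have := divn_eq n 4; lia.
  have n_odd : odd n by rewrite n_eq oddD oddM.
  have lt_rn : (r < n)%N by lia.
  have rhs_val := frac_value_rhs_term (frac_value_qv z) (qpoch_prim_neq0 z_prim n_odd lt_rn).
  have := frac_valueB (frac_value_lhs_sum z_prim n_odd) rhs_val.
  by rewrite (sum_lhs_term_1mod4 z_prim n_odd n_eq) subrr.
have n_eq : n = (4 * (n %/ 4) + 3)%N by have := divn_eq n 4; lia.
have n_odd : odd n by rewrite n_eq oddD oddM.
have := frac_value_lhs_sum z_prim n_odd.
by rewrite (sum_lhs_term_3mod4 z_prim n_odd n_eq) subr0.
Qed.
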